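(* Let $n\ge1$ be an integer and, for $j=0,\dots,n$, let $f_{2j}$ be a homogeneous polynomial of degree $2j$ with complex coefficients in the four entries of a $2\times2$ matrix, not divisible by $\det$ (viewed as a degree-$2$ polynomial). Let $S_{2n}\subset\mathbb{K}P^3$ be the surface defined by $F_{2n}(A)=0$, where $$F_{2n}(A)=\sum_{j=0}^n t^{-j(j+1)}(\det A)^{n-j}f_{2j}(A).$$ Let $C_{2j}=\{[B]_{\mathbb{C}^*}\in Q(\mathbb{C}): f_{2j}(B)=0\}$. For $j=1,\dots,n$ let $\sigma_j$ be the section of $\mathcal{S}$ over $Q(\mathbb{C})\setminus(C_{2j-2}\cup C_{2j})$ given by $\sigma_j([B]_{\mathbb{C}^*})=\left[\sqrt{-\tfrac{f_{2j-2}(B)}{f_{2j}(B)}}\,B\right]_{\mathbb{R}^*}$. Then $$\operatorname{VAL}(S_{2n})\subset\Sigma_\infty\cup\Sigma_R\cup\Sigma_C,$$ where $\Sigma_\infty=\{\infty\}\times C_{2n}$, $\Sigma_R=\bigcup_{j=1}^{n-1}((j,j+1)\cap\mathbb{Q})\times\mathcal{S}|_{C_{2j}}\ \cup\ ((n,\infty)\cap\mathbb{Q})\times\mathcal{S}|_{C_{2n}}$, and $\Sigma_C=\bigcup_{j=1}^n\{j\}\times\Big(\sigma_j\big(Q(\mathbb{C})\setminus(C_{2j-2}\cup C_{2j})\big)\cup\mathcal{S}|_{C_{2j-2}\cap C_{2j}}\Big)$.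
   Context: Matrices and classes. For a $2\times 2$ matrix $B=\begin{pmatrix}a&b\\ c&d\end{pmatrix}$ write $B^{\mathbf c}=\begin{pmatrix}d&-b\\ -c&a\end{pmatrix}$; $B^*$ is the conjugate transpose. $\mathbb{C}P^3$ is the projectivization of the space of complex $2\times2$ matrices; $[B]_{\mathbb{C}^*}$ is the class of a nonzero matrix up to nonzero complex scalars, $[B]_{\mathbb{R}^*}$ its class up to nonzero real scalars. $Q(\mathbb{C})=\{[B]_{\mathbb{C}^*}:\det B=0\}$, $PSU(2)=\{[U]_{\mathbb{C}^*}:U\in SU(2)\}$. Circle bundle. $\mathcal{S}$ is the set of classes $[B]_{\mathbb{R}^*}$ of complex $2\times2$ matrices of rank one, with projection $\pi\colon\mathcal{S}\to Q(\mathbb{C})$, $[B]_{\mathbb{R}^*}\mapsto[B]_{\mathbb{C}^*}$; for $Z\subset Q(\mathbb{C})$, $\mathcal{S}|_Z=\pi^{-1}(Z)$; a section over $Z$ is a map $\sigma\colon Z\to\mathcal{S}$ with $\pi\circ\sigma=\mathrm{id}_Z$ (the formula for $\sigma_j$ is independent of the representative $B$ and the choice of square root, since classes are taken up to real scalars). Cone notation (subsets of $\mathbb{C}P^3$). For $I\subset(0,\infty)$ and $T\subset\mathcal{S}$, $I\times T:=\{[e^\alpha B+e^{-\alpha}(B^{\mathbf c})^*]_{\mathbb{C}^*}:\alpha\in I,\ [B]_{\mathbb{R}^*}\in T\}$; for $Y\subset Q(\mathbb{C})$, $\{\infty\}\times Y:=Y$. Field and valuation. $\mathbb{K}$ is the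 field of Puiseux series in $t$ (with $t\to\infty$) with complex coefficients, i.e. series $\sum_q a_q t^q$ with $a_q\in\mathbb{C}$ and exponents in $\frac1N\mathbb{Z}$ for some $N\ge1$, bounded above. $\mathbb{K}P^3$ is the projectivization of the space of $2\times 2$ matrices over $\mathbb{K}$. Every nonzero matrix $A$ over $\mathbb{K}$ can be written uniquely as $A=t^\alpha B+(\text{terms with exponents}<\alpha)$ with $\alpha\in\mathbb{Q}$ and $B$ a nonzero complex matrix. The map $\operatorname{VAL}\colon\mathbb{K}P^3\to\mathbb{C}P^3$ is: if $\det A=0$, $\operatorname{VAL}([A])=[B]_{\mathbb{C}^*}$; if $\det A\ne0$, rescale $A$ so that $\det A=1$ (then $\alpha\ge0$), and set $\operatorname{VAL}([A])=[e^\alpha B+e^{-\alpha}(B^{\mathbf c})^*]_{\mathbb{C}^*}$. *)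

From HB Require Import structures.
From mathcomp Require Import all_boot all_order all_algebra.
From mathcomp Require Import boolp classical_sets fsbigop.
From mathcomp Require Import reals Rstruct.
From mathcomp Require Import complex.
From mathcomp Require Import mpoly.
Set Implicit Arguments. Unset Strict Implicit. Unset Printing Implicit Defensive.
Import Order.TTheory GRing.Theory Num.Theory.
Local Open Scope ring_scope.

Definition CC := complex Rdefinitions.R.

Definition eC (a : rat) : CC := ((Rtrigo_def.exp (ratr a))%:C)%C.
Definition rC (r : Rdefinitions.R) : CC := (r%:C)%C.

Definition ents (T : Type) (M : 'M[T]_2) : 'I_4 -> T :=
  fun i => match val i with
           | 0 => M 0 0 | 1 => M 0 1 | 2 => M 1 0 | _ => M 1 1 end.

Definition evM (p : {mpoly CC[4]}) (M : 'M[CC]_2) : CC := p.@[ents M].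

Definition detP : {mpoly CC[4]} :=
  'X_(inord 0) * 'X_(inord 3) - 'X_(inord 1) * 'X_(inord 2).

Definition homog_deg (p : {mpoly CC[4]}) (d : nat) : Prop :=
  p \is ishomog1 d mdeg.

Definition mxc (B : 'M[CC]_2) : 'M[CC]_2 :=
  \matrix_(i < 2, j < 2)
    (if (i == 0) && (j == 0) then B 1 1
     else if (i == 0) && (j == 1) then - B 0 1
     else if (i == 1) && (j == 0) then - B 1 0
     else B 0 0).
Definition mxstar (B : 'M[CC]_2) : 'M[CC]_2 := \matrix_(i < 2, j < 2) conjc (B j i).

Definition coneM (a : rat) (B : 'M[CC]_2) : 'M[CC]_2 :=
  eC a *: B + eC (- a) *: mxstar (mxc B).

(* A series is given by its coefficient function q |-> a_q (coefficient of t^q). *)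
Definition ser := rat -> CC.

Definition is_puiseux (a : ser) : Prop :=
  exists N : nat, (0 < N)%N /\ exists M : rat,
    forall q : rat, a q != 0 -> (exists z : int, q * N%:R = z%:~R) /\ q <= M.

Definition kzero : ser := fun _ => 0.
Definition kconst (c : CC) : ser := fun q => if q == 0 then c else 0.
Definition tpow (e : rat) : ser := fun q => if q == e then 1 else 0.
Definition kadd (a b : ser) : ser := fun q => a q + b q.
Definition kopp (a : ser) : ser := fun q => - a q.
(* Cauchy product; for Puiseux series the support of the sum is finite *)
Definition kmul (a b : ser) : ser := fun q =>
  \sum_(x \in [set x : rat | a x != 0 /\ b (q - x) != 0]) a x * b (q - x).
Definition kpow (a : ser) (k : nat) : ser := iter k (kmul a) (kconst 1).

Definition kdet (A : 'M[ser]_2) : ser :=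
  kadd (kmul (A 0 0) (A 1 1)) (kopp (kmul (A 0 1) (A 1 0))).
Definition kscale (l : ser) (A : 'M[ser]_2) : 'M[ser]_2 :=
  \matrix_(i < 2, j < 2) kmul l (A i j).
Definition kmx_puiseux (A : 'M[ser]_2) : Prop := forall i j, is_puiseux (A i j).
Definition kmx_nonzero (A : 'M[ser]_2) : Prop := exists i j, A i j <> kzero.

Definition kmonom (x : 'I_4 -> ser) (m : 'X_{1..4}) : ser :=
  foldr (fun i acc => kmul (kpow (x i) (m i)) acc) (kconst 1) (enum 'I_4).
Definition keval (p : {mpoly CC[4]}) (x : 'I_4 -> ser) : ser :=
  foldr kadd kzero [seq kmul (kconst p@_m) (kmonom x m) | m <- msupp p].

(* F_{2n}(A) = sum_{j=0}^n t^{-j(j+1)} (det A)^{n-j} f_{2j}(A) ; f j stands for f_{2j} *)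
Definition Fsurf (n : nat) (f : nat -> {mpoly CC[4]}) (A : 'M[ser]_2) : ser :=
  foldr kadd kzero
    [seq kmul (tpow (- ((j * j.+1)%N)%:R))
              (kmul (kpow (kdet A) (n - j)) (keval (f j) (ents A)))
    | j <- iota 0 n.+1].

Definition lead (A : 'M[ser]_2) (a : rat) (B : 'M[CC]_2) : Prop :=
  B != 0 /\ (forall i j, B i j = A i j a) /\
  (forall q, a < q -> forall i j, A i j q = 0).

(* VAL([A]) is the class of the complex matrix M (relational form) *)
Definition VALrel (A : 'M[ser]_2) (M : 'M[CC]_2) : Prop :=
  (kdet A = kzero /\ exists a B, lead A a B /\ M = B) \/
  (kdet A <> kzero /\ exists (l : ser) a B,
      is_puiseux l /\ kdet (kscale l A) = kconst 1 /\
      lead (kscale l A) a B /\ M = coneM a B).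

(* ---------- the sets in CP^3 (predicates on representatives) ---------- *)
Definition inQ (B : 'M[CC]_2) : Prop := B != 0 /\ \det B = 0.
(* [B]_C lies in C_{2j} (equivalently [B]_R lies in S|_{C_{2j}}) *)
Definition inCj (f : nat -> {mpoly CC[4]}) (j : nat) (B : 'M[CC]_2) : Prop :=
  inQ B /\ evM (f j) B = 0.
(* [M]_C lies in I x T, for the single exponent a *)
Definition inCone (a : rat) (T : 'M[CC]_2 -> Prop) (M : 'M[CC]_2) : Prop :=
  exists B, T B /\ exists l : CC, l != 0 /\ M = l *: coneM a B.
Definition sigma_img (f : nat -> {mpoly CC[4]}) (j : nat) (B' : 'M[CC]_2) : Prop :=
  exists B, inQ B /\ evM (f j.-1) B != 0 /\ evM (f j) B != 0 /\
    exists w : CC, w ^+ 2 = - (evM (f j.-1) B / evM (f j) B) /\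
    exists r : Rdefinitions.R, r != 0 /\ B' = rC r *: (w *: B).

Definition Sigma_inf n f (M : 'M[CC]_2) : Prop := inCj f n M.
Definition Sigma_R n f (M : 'M[CC]_2) : Prop :=
  (exists j : nat, (1 <= j <= n.-1)%N /\ exists a : rat,
      j%:R < a < j.+1%:R /\ inCone a (inCj f j) M) \/
  (exists a : rat, n%:R < a /\ inCone a (inCj f n) M).
Definition Sigma_C n f (M : 'M[CC]_2) : Prop :=
  exists j : nat, (1 <= j <= n)%N /\
    inCone j%:R (fun B => sigma_img f j B \/ (inCj f j.-1 B /\ inCj f j B)) M.

(* Write lA = t^a B + (lower terms), where l = 1 if det A = 0 and l
   normalises det(lA) to 1 otherwise.  If det A = 0, only the term j = n of
   F_{2n}(A) survives and its leading coefficient f_{2n}(B) must vanish.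
   Otherwise let c t^b and d t^e lead l and det A; det(lA) = 1 forces
   e = -2b and c^2 d = 1, so the j-th term of F_{2n}(A) has degree at most
   -2nb + (2ja - j(j+1)), with coefficient d^n f_{2j}(B) there.  The exponent
   2ja - j(j+1) is concave in j: on 0 <= j <= n its maximum is attained at a
   single index unless a = k is an integer in [1, n], where it is attained
   exactly at k - 1 and k.  As F_{2n}(A) = 0 the dominant coefficients
   cancel: f_{2j}(B) = 0 in the first case (j = 0 is excluded since f_0 is a
   nonzero constant), and f_{2k-2}(B) + f_{2k}(B) = 0 in the second, which
   says that either [B]_R = sigma_k([B]_C) or [B]_C lies in C_{2k-2} and in
   C_{2k}. *)

From HB Require Import structures.
From mathcomp Require Import all_boot all_order all_algebra.
From mathcomp Require Import boolp classical_sets fsbigop cardinality.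
From mathcomp Require Import reals Rstruct.
From mathcomp Require Import complex.
From mathcomp Require Import mpoly.
From mathcomp Require Import zify ring lra.
Import Order.TTheory GRing.Theory Num.Theory.
Local Open Scope classical_set_scope.
Local Open Scope ring_scope.

(** * Series arithmetic *)

Lemma kmulE (a b : ser) q : kmul a b q = \sum_(x \in [set: rat]) a x * b (q - x).
Proof.
apply: fsbig_widen => // x [_ /= /not_andP [] /negP];
  by rewrite negbK => /eqP ->; rewrite ?mul0r ?mulr0.
Qed.

Lemma kmul0 (a : ser) : kmul kzero a = kzero.
Proof. by apply/funext => q; rewrite kmulE fsbig1 // => x _; rewrite mul0r. Qed.

Lemma kmulr0 (a : ser) : kmul a kzero = kzero.
Proof. by apply/funext => q; rewrite kmulE fsbig1 // => x _; rewrite mulr0. Qed.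

Lemma kmulC (a b : ser) : kmul a b = kmul b a.
Proof.
apply/funext => q; rewrite !kmulE (reindex_fsbigT (fun x => q - x)); last first.
  by exists (fun x => q - x) => x; rewrite subKr.
by apply: eq_fsbigr => x _; rewrite subKr mulrC.
Qed.

Lemma kmulN (a b : ser) : kmul a (kopp b) = kopp (kmul a b).
Proof.
apply/funext => q; rewrite /kopp !kmulE -mulN1r mulr_fsumr.
by apply: eq_fsbigr => x _; rewrite mulN1r mulrN.
Qed.

Lemma kadd_foldrE (T : Type) (s : seq T) (G : T -> ser) q :
  foldr kadd kzero (map G s) q = \sum_(x <- s) G x q.
Proof. by elim: s => [|y s IH]; rewrite ?big_nil ?big_cons //= /kadd IH. Qed.

(** * Leading terms *)

(* [s] vanishes above [t^v] and has coefficient [c] there; [c] may be [0], so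
   [v] is only an upper bound for the degree of [s]. *)
Definition top_term (s : ser) (v : rat) (c : CC) : Prop :=
  (forall q, v < q -> s q = 0) /\ s v = c.

Lemma top_term_kzero v : top_term kzero v 0.
Proof. by []. Qed.

Lemma top_term_kconst c : top_term (kconst c) 0 c.
Proof. by split=> [q /gt_eqF q0|]; rewrite /kconst ?q0 ?eqxx. Qed.

Lemma top_term_tpow e : top_term (tpow e) e 1.
Proof. by split=> [q /gt_eqF qe|]; rewrite /tpow ?qe ?eqxx. Qed.

Lemma top_term_kmul {a b : ser} {u w : rat} {x y : CC} :
  top_term a u x -> top_term b w y -> top_term (kmul a b) (u + w) (x * y).
Proof.
move=> [ha <-] [hb <-]; split=> [q hq|].
  rewrite kmulE fsbig1 // => z _; case: (lerP z u) => zu; last by rewrite ha ?mul0r.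
  by rewrite hb ?mulr0 //; lra.
rewrite kmulE -(fsbig_widen [set u]) //.
  by rewrite fsbig_set1 [u + w]addrC addrK.
move=> z [_ /eqP zu].
rewrite /preimage /=; case: (ltgtP z u) => [zu'|zu'|zeq]; last by rewrite zeq eqxx in zu.
  by rewrite hb ?mulr0 //; lra.
by rewrite ha ?mul0r.
Qed.

Lemma top_term_kpow {a : ser} {u : rat} {x : CC} k :
  top_term a u x -> top_term (kpow a k) (k%:R * u) (x ^+ k).
Proof.
move=> ha; elim: k => [|k IH]; first by rewrite mul0r expr0; apply: top_term_kconst.
by rewrite /kpow iterS -/(kpow a k) exprS -natr1 mulrDl mul1r addrC; apply: top_term_kmul.
Qed.

Lemma top_term_sum (T : eqType) (s : seq T) (G : T -> ser) v (c : T -> CC) :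
  {in s, forall m, top_term (G m) v (c m)} ->
  top_term (foldr kadd kzero (map G s)) v (\sum_(m <- s) c m).
Proof.
move=> hG; split=> [q hq|]; rewrite kadd_foldrE.
  by rewrite big1_seq // => m /andP [_ /hG [+ _]]; apply.
by apply: eq_big_seq => m /hG [].
Qed.

Lemma top_term_kmonom {x : 'I_4 -> ser} {u : rat} {b : 'I_4 -> CC} :
  (forall i, top_term (x i) u (b i)) -> forall m : 'X_{1..4},
  top_term (kmonom x m) ((mdeg m)%:R * u) (\prod_i b i ^+ m i).
Proof.
move=> hx m; rewrite /kmonom mdegE -big_enum -[\prod_i _]big_enum /=.
elim: (enum 'I_4) => [|i s IH]; first by rewrite !big_nil mul0r; apply: top_term_kconst.
by rewrite !big_cons natrD mulrDl; apply: top_term_kmul; first exact: top_term_kpow.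
Qed.

Lemma top_term_keval {p : {mpoly CC[4]}} {d : nat} {x : 'I_4 -> ser} {u : rat}
    {b : 'I_4 -> CC} :
  homog_deg p d -> (forall i, top_term (x i) u (b i)) ->
  top_term (keval p x) (d%:R * u) p.@[b].
Proof.
move=> /dhomogP hp hx; rewrite mevalE; apply: top_term_sum => m /hp <-.
rewrite -[_ * u]add0r.
by apply: top_term_kmul; [exact: top_term_kconst | exact: top_term_kmonom].
Qed.

Lemma top_term_inj {s : ser} {v c v' c'} : top_term s v c -> top_term s v' c' ->
  c != 0 -> c' != 0 -> v = v' /\ c = c'.
Proof.
move=> [sv <-] [sv' <-] c0 c0'.
have vv' : v = v'.
  by case: (ltgtP v v') => // [/sv|/sv'] /eqP; rewrite ?(negbTE c0) ?(negbTE c0').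
by rewrite vv'.
Qed.

Definition mx_top (A : 'M[ser]_2) (a : rat) (B : 'M[CC]_2) : Prop :=
  forall i j, top_term (A i j) a (B i j).

Lemma lead_mx_top {A : 'M[ser]_2} {a B} : lead A a B -> mx_top A a B.
Proof. by move=> [_ [hB hA]] i j; split => [q /hA|]; rewrite ?hB. Qed.

Lemma mx_top_inj {A : 'M[ser]_2} {a B a' B'} : mx_top A a B -> mx_top A a' B' ->
  B != 0 -> B' != 0 -> a = a' /\ B = B'.
Proof.
move=> hB hB' B0 B0'.
have vanish a1 a2 (B1 B2 : 'M[CC]_2) : mx_top A a1 B1 -> mx_top A a2 B2 ->
    a1 < a2 -> B2 = 0.
  by move=> h1 h2 a12; apply/matrixP => i j; rewrite mxE -(h2 i j).2 (h1 i j).1.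
have aa' : a = a'.
  case: (ltgtP a a') => // [/(vanish _ _ _ _ hB hB')|/(vanish _ _ _ _ hB' hB)] /eqP.
    by rewrite (negbTE B0').
  by rewrite (negbTE B0).
split => //; apply/matrixP => i j.
by rewrite -(hB i j).2 -(hB' i j).2 aa'.
Qed.

Lemma top_term_ents {A : 'M[ser]_2} {a B} :
  mx_top A a B -> forall i, top_term (ents A i) a (ents B i).
Proof. by move=> h i; rewrite /ents; case: (val i) => [|[|[|?]]]; apply: h. Qed.

Lemma det_mx22 (R : comNzRingType) (B : 'M[R]_2) :
  \det B = B 0 0 * B 1 1 - B 0 1 * B 1 0.
Proof.
rewrite (expand_det_row _ 0) big_ord_recl big_ord1 /cofactor !det_mx11 !mxE /=.
rewrite !expr0 !mul1r expr1 mulN1r mulrN.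
by congr (_ * B _ _ - B _ _ * B _ _); apply/val_inj.
Qed.

Lemma top_term_kdet {A : 'M[ser]_2} {a B} :
  mx_top A a B -> top_term (kdet A) (a + a) (\det B).
Proof.
move=> h; have [u1 c1] := top_term_kmul (h 0 0) (h 1 1).
have [u2 c2] := top_term_kmul (h 0 1) (h 1 0).
split=> [q aq|]; rewrite /kdet /kadd /kopp /=; first by rewrite u1 ?u2 // oppr0 addr0.
by rewrite c1 c2 det_mx22.
Qed.

Lemma mx_top_kscale {l : ser} {be c} {A : 'M[ser]_2} {a B} :
  top_term l be c -> mx_top A a B -> mx_top (kscale l A) (be + a) (c *: B).
Proof. by move=> hl hA i j; rewrite !mxE; apply: top_term_kmul. Qed.

(** * Puiseux series *)

Definition supp (s : ser) : set rat := [set q | s q != 0].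

Definition grid (N : nat) (M : rat) : set rat :=
  [set q | (exists z : int, q * N%:R = z%:~R) /\ q <= M].

Lemma puiseux_grid {s : ser} :
  is_puiseux s -> exists N M, (0 < N)%N /\ supp s `<=` grid N M.
Proof. by move=> [N [N0 [M h]]]; exists N, M. Qed.

Lemma grid_puiseux {N M} {s : ser} :
  (0 < N)%N -> supp s `<=` grid N M -> is_puiseux s.
Proof. by move=> N0 h; exists N; split => //; exists M. Qed.

Lemma grid_sub N M N' M' : (N %| N')%N -> M <= M' -> grid N M `<=` grid N' M'.
Proof.
move=> /dvdnP [k ->] MM' q [[z qz] qM]; split; last exact: le_trans MM'.
by exists (z * k%:Z); rewrite natrM mulrCA qz intrM mulrC.
Qed.

Lemma grid_add N M1 M2 q1 q2 :
  grid N M1 q1 -> grid N M2 q2 -> grid N (M1 + M2) (q1 + q2).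
Proof.
move=> [[z1 h1] le1] [[z2 h2] le2]; split; last exact: lerD.
by exists (z1 + z2); rewrite intrD -h1 -h2 mulrDl.
Qed.

Lemma puiseux_common_grid {I : finType} (a : I -> ser) :
  (forall i, is_puiseux (a i)) ->
  exists N M, (0 < N)%N /\ forall i, supp (a i) `<=` grid N M.
Proof.
move=> ha; have /choice [NM hNM] : forall i, exists NM : nat * rat,
    (0 < NM.1)%N /\ supp (a i) `<=` grid NM.1 NM.2.
  by move=> i; have [N [M h]] := puiseux_grid (ha i); exists (N, M).
exists (\prod_i (NM i).1)%N, (\sum_i `|(NM i).2|); split.
  by apply: prodn_gt0 => i; have [] := hNM i.
move=> i; have [_ h] := hNM i; apply: (subset_trans h); apply: grid_sub.
  by rewrite (bigD1 i) //= dvdn_mulr.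
by rewrite (bigD1 i) //= (le_trans (ler_norm _)) // lerDl sumr_ge0.
Qed.

Lemma puiseux_grid3 {a b c : ser} :
  is_puiseux a -> is_puiseux b -> is_puiseux c -> exists N M, (0 < N)%N /\
    [/\ supp a `<=` grid N M, supp b `<=` grid N M & supp c `<=` grid N M].
Proof.
move=> ha hb hc; have [|N [M [N0 g]]] :=
  puiseux_common_grid (fun i : 'I_3 => nth kzero [:: a; b; c] i).
  by case=> [[|[|[|//]]] ?].
by exists N, M; split => //; split; [exact: (g 0) | exact: (g 1) | exact: (g 2)].
Qed.

Lemma grid_window_finite N M lo :
  (0 < N)%N -> finite_set (grid N M `&` [set q | lo <= q]).
Proof.
move=> N0; have Nr : (0 : rat) < N%:R by rewrite ltr0n.
pose B := Num.bound (`|lo * N%:R| + `|M * N%:R|).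
have hB : `|lo * N%:R| + `|M * N%:R| < (B%:Z)%:~R.
  exact: (archi_boundP (addr_ge0 (normr_ge0 _) (normr_ge0 _))).
apply: (sub_finite_set _ (finite_image
  (fun m : nat => ((m%:Z - B%:Z)%:~R / N%:R : rat)) (finite_II (B + B).+1))).
move=> q [[[z qz] qM] /= loq].
have hl : lo * N%:R <= z%:~R by rewrite -qz ler_pM2r.
have hh : z%:~R <= M * N%:R by rewrite -qz ler_pM2r.
have lo_abs := ler_norm (- (lo * N%:R)); rewrite normrN in lo_abs.
have M_abs := ler_norm (M * N%:R).
have lo_abs0 := normr_ge0 (lo * N%:R); have M_abs0 := normr_ge0 (M * N%:R).
have zlo : - (B%:Z) < z by rewrite -(ltr_int rat) rmorphN /=; lra.
have zhi : z < B%:Z by rewrite -(ltr_int rat); lra.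
exists (absz (z + B%:Z)); first by rewrite /=; lia.
have -> : (absz (z + B%:Z))%:Z = z + B%:Z by lia.
by rewrite addrK -qz mulfK // gt_eqF.
Qed.

Lemma grid_max {N M} {P : set rat} : (0 < N)%N -> P `<=` grid N M -> P !=set0 ->
  exists2 v, P v & forall q, P q -> q <= v.
Proof.
move=> N0 hP [q0 Pq0]; have Nr : (0 : rat) < N%:R by rewrite ltr0n.
pose K := Num.floor (M * N%:R).
have hK q : P q -> exists z : int, q * N%:R = z%:~R /\ z <= K.
  move=> /hP [[z qz] qM]; exists z; split => //.
  by rewrite floor_ge_int -qz ler_pM2r.
have hex : exists m : nat,
    `[< exists q z, [/\ P q, q * N%:R = z%:~R & z = K - m%:Z] >].
  have [z0 [qz0 z0K]] := hK q0 Pq0.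
  by exists (absz (K - z0)); apply/asboolP; exists q0, z0; split => //; lia.
case: (ex_minnP hex) => m /asboolP [v [z [Pv vz zm]]] minm.
exists v => // q Pq; have [z' [qz' z'K]] := hK q Pq.
have : (m <= absz (K - z'))%N.
  by apply: minm; apply/asboolP; exists q, z'; split => //; lia.
move=> mz'; have zz' : z' <= z by lia.
by rewrite -(ler_pM2r Nr) qz' vz ler_int.
Qed.

Lemma ser_neq0P (s : ser) : s <> kzero -> exists q, s q != 0.
Proof.
move=> s0; apply: contra_notP s0 => h; apply/funext => q.
by apply/eqP/negPn/negP => sq; apply: h; exists q.
Qed.

Lemma puiseux_lead {s : ser} :
  is_puiseux s -> s <> kzero -> exists v c, c != 0 /\ top_term s v c.
Proof.
move=> /puiseux_grid [N [M [N0 hs]]] /ser_neq0P s0.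
have [v sv vmax] := grid_max N0 hs s0.
exists v, (s v); split => //; split => // q vq.
by apply/eqP/negPn/negP => sq; move: (vmax q sq); rewrite leNgt vq.
Qed.

Lemma kmx_lead {A : 'M[ser]_2} :
  kmx_puiseux A -> kmx_nonzero A -> exists a B, lead A a B.
Proof.
move=> hA [i0 [j0 /ser_neq0P [q0 Aq0]]].
have [N [M [N0 g]]] :=
  puiseux_common_grid (fun ij : 'I_2 * 'I_2 => A ij.1 ij.2) (fun ij => hA _ _).
pose P q := exists i j, A i j q != 0.
have hP : P `<=` grid N M by move=> q [i [j /(g (i, j))]].
have P0 : P !=set0 by exists q0, i0, j0.
have [v [i [j Av]] vmax] := grid_max N0 hP P0.
exists v, (\matrix_(i, j) A i j v); split; last split.
- by apply: contraNneq Av => /matrixP/(_ i j); rewrite !mxE => ->.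
- by move=> i' j'; rewrite mxE.
move=> q vq i' j'; apply/eqP/negPn/negP => Aq.
by move: (vmax q (ex_intro _ i' (ex_intro _ j' Aq))); rewrite leNgt vq.
Qed.

Lemma kmul_supp (a b : ser) q :
  kmul a b q != 0 -> exists x, a x != 0 /\ b (q - x) != 0.
Proof.
apply: contraNP => h; apply/eqP; rewrite kmulE fsbig1 // => x _.
have [->|ax] := eqVneq (a x) 0; first by rewrite mul0r.
have [->|bx] := eqVneq (b (q - x)) 0; first by rewrite mulr0.
by case: h; exists x.
Qed.

Lemma supp_kmul {a b : ser} {N Ma Mb} : supp a `<=` grid N Ma ->
  supp b `<=` grid N Mb -> supp (kmul a b) `<=` grid N (Ma + Mb).
Proof.
move=> ha hb q /kmul_supp [x [/ha ax /hb bx]].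
by rewrite -(subrKC x q); apply: grid_add.
Qed.

Lemma supp_kadd {a b : ser} {N M} : supp a `<=` grid N M ->
  supp b `<=` grid N M -> supp (kadd a b) `<=` grid N M.
Proof.
move=> ga gb q; rewrite /supp /kadd /= => abq.
have [aq|/ga //] := eqVneq (a q) 0.
by apply: gb; move: abq; rewrite aq add0r.
Qed.

Lemma kmul_puiseux {a b : ser} :
  is_puiseux a -> is_puiseux b -> is_puiseux (kmul a b).
Proof.
move=> ha hb; have [N [M [N0 [ga gb _]]]] := puiseux_grid3 ha hb hb.
exact: grid_puiseux N0 (supp_kmul ga gb).
Qed.

Lemma kadd_puiseux {a b : ser} :
  is_puiseux a -> is_puiseux b -> is_puiseux (kadd a b).
Proof.
move=> ha hb; have [N [M [N0 [ga gb _]]]] := puiseux_grid3 ha hb hb.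
exact: grid_puiseux N0 (supp_kadd ga gb).
Qed.

Lemma kopp_puiseux {a : ser} : is_puiseux a -> is_puiseux (kopp a).
Proof.
move=> /puiseux_grid [N [M [N0 ga]]]; apply: (grid_puiseux (M := M) N0) => q.
by rewrite /supp /kopp /= oppr_eq0 => /ga.
Qed.

Lemma kdet_puiseux {A : 'M[ser]_2} : kmx_puiseux A -> is_puiseux (kdet A).
Proof.
by move=> hA; apply: kadd_puiseux; last apply: kopp_puiseux; apply: kmul_puiseux.
Qed.

Lemma fsumT_sub {W : set rat} {F : rat -> CC} :
  (forall x, F x != 0 -> W x) ->
  \sum_(x \in [set: rat]) F x = \sum_(x \in W) F x.
Proof.
move=> hW; apply/esym/fsbig_widen => // x [_ /= nW].
by apply/eqP/negPn/negP => /hW.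
Qed.

Lemma exchange_fsumT {X Y : set rat} {F : rat -> rat -> CC} :
  finite_set X -> finite_set Y -> (forall x y, F x y != 0 -> X x /\ Y y) ->
  \sum_(x \in [set: rat]) \sum_(y \in [set: rat]) F x y =
  \sum_(y \in [set: rat]) \sum_(x \in [set: rat]) F x y.
Proof.
move=> fX fY hF.
have inX x : \sum_(y \in [set: rat]) F x y != 0 -> X x.
  apply: contraNP => nX; rewrite fsbig1 // => y _.
  by apply/eqP/negPn/negP => /hF [].
have inY y : \sum_(x \in [set: rat]) F x y != 0 -> Y y.
  apply: contraNP => nY; rewrite fsbig1 // => x _.
  by apply/eqP/negPn/negP => /hF [].
rewrite (fsumT_sub inX) [RHS](fsumT_sub inY).
rewrite (eq_fsbigr (fun x => \sum_(y \in Y) F x y)); last first.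
  by move=> x _; apply: fsumT_sub => y /hF [].
rewrite [RHS](eq_fsbigr (fun y => \sum_(x \in X) F x y)); last first.
  by move=> y _; apply: fsumT_sub => x /hF [].
exact: exchange_fsbig.
Qed.

(* The Cauchy sums of Puiseux series are finite; for general series an infinite
   [\sum_(x \in _)] is a junk [0], hence the hypotheses of the ring laws. *)
Lemma kmulA {a b c : ser} : is_puiseux a -> is_puiseux b -> is_puiseux c ->
  kmul (kmul a b) c = kmul a (kmul b c).
Proof.
move=> ha hb hc; have [N [M [N0 [ga gb gc]]]] := puiseux_grid3 ha hb hc.
apply/funext => q.
have hW x y : a x * b (y - x) * c (q - y) != 0 ->
    (grid N M `&` [set x | q - (M + M) <= x]) x /\
    (grid N (M + M) `&` [set y | q - M <= y]) y.
  rewrite !mulf_eq0 !negb_or => /andP [/andP [/ga ax /gb bxy] /gc cy].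
  have [_ yxM] := bxy; have [_ qyM] := cy.
  split; split => //=; [lra | rewrite -(subrKC x y); exact: grid_add ax bxy | lra].
transitivity (\sum_(x \in [set: rat]) \sum_(y \in [set: rat])
                a x * b (y - x) * c (q - y)).
  rewrite kmulE (eq_fsbigr (fun y => \sum_(x \in [set: rat])
                a x * b (y - x) * c (q - y))); last first.
    by move=> y _; rewrite kmulE mulr_fsuml.
  by rewrite (exchange_fsumT _ _ hW) //; apply: grid_window_finite.
rewrite [in RHS]kmulE; apply: eq_fsbigr => x _.
rewrite kmulE mulr_fsumr [in RHS](reindex_fsbigT (fun y => y - x)); last first.
  by exists (fun y => y + x) => y; rewrite ?addrK ?subrK.
by apply: eq_fsbigr => y _; rewrite mulrA; congr (_ * c _); ring.
Qed.

Lemma kmulDr {a b c : ser} : is_puiseux a -> is_puiseux b -> is_puiseux c ->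
  kmul a (kadd b c) = kadd (kmul a b) (kmul a c).
Proof.
move=> ha hb hc; have [N [M [N0 [ga gb gc]]]] := puiseux_grid3 ha hb hc.
apply/funext => q; pose W := grid N M `&` [set x | q - M <= x].
have inW (g : ser) : supp g `<=` grid N M -> forall x, a x * g (q - x) != 0 -> W x.
  move=> gg x; rewrite mulf_eq0 negb_or => /andP [/ga ax /gg [_ gx]].
  by split => //=; lra.
rewrite kmulE (fsumT_sub (inW _ (supp_kadd gb gc))) /kadd !kmulE.
rewrite (fsumT_sub (inW _ gb)) (fsumT_sub (inW _ gc)) -fsbig_split.
  by apply: eq_fsbigr => x _; rewrite mulrDr.
exact: grid_window_finite.
Qed.

Lemma kmulACA {a b c d : ser} :
  is_puiseux a -> is_puiseux b -> is_puiseux c -> is_puiseux d ->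
  kmul (kmul a b) (kmul c d) = kmul (kmul a c) (kmul b d).
Proof.
move=> ha hb hc hd.
rewrite (kmulA ha hb (kmul_puiseux hc hd)) -(kmulA hb hc hd) [kmul b c]kmulC.
by rewrite (kmulA hc hb hd) (kmulA ha hc (kmul_puiseux hb hd)).
Qed.

Lemma kdet_kscale (l : ser) (A : 'M[ser]_2) : is_puiseux l -> kmx_puiseux A ->
  kdet (kscale l A) = kmul (kmul l l) (kdet A).
Proof.
move=> hl hA; rewrite /kdet /kscale !mxE.
rewrite (kmulACA hl (hA 0 0) hl (hA 1 1)) (kmulACA hl (hA 0 1) hl (hA 1 0)).
rewrite -kmulN -kmulDr //.
all: first [exact: kmul_puiseux | exact/kopp_puiseux/kmul_puiseux].
Qed.

(** * The dominant exponent *)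

Definition trop_exp (a : rat) (j : nat) : rat := 2 * j%:R * a - j%:R * (j%:R + 1).

Lemma trop_expB (a : rat) i j :
  trop_exp a i - trop_exp a j = (i%:R - j%:R) * (2 * a - i%:R - j%:R - 1).
Proof. by rewrite /trop_exp; ring. Qed.

Lemma ltn_ratE (i j : nat) : (i < j)%N = (i%:R + 1 <= j%:R :> rat).
Proof. by rewrite natr1 ler_nat. Qed.

Lemma trop_exp_argmax {n} {a : rat} :
  0 <= a -> ~ (exists2 k, (1 <= k <= n)%N & a = k%:R) ->
  forall j, (j <= n)%N -> j != minn (Num.truncn a) n ->
  trop_exp a j < trop_exp a (minn (Num.truncn a) n).
Proof.
move=> a0 nk j jn; set j0 := minn _ n.
have /andP [ta at1] := truncn_itv a0.
have j0a : j0%:R <= a by apply: le_trans ta; rewrite ler_nat geq_minl.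
rewrite neq_ltn -subr_gt0 trop_expB => /orP [jj0|j0j].
  have j0a' : j0%:R < a.
    rewrite lt_neqAle j0a andbT; apply/eqP => aj0; apply: nk; exists j0 => //.
    by rewrite geq_minr andbT (leq_ltn_trans _ jj0).
  by move: jj0; rewrite ltn_ratE => jj0; apply: mulr_gt0; lra.
have j0t : j0 = Num.truncn a by apply/minn_idPl; move: j0j jn; rewrite /j0; lia.
move: j0j; rewrite ltn_ratE => j0j; rewrite -mulrNN; apply: mulr_gt0.
  by lra.
by move: at1; rewrite -j0t -natr1; lra.
Qed.

Lemma natr_pred k : (1 <= k)%N -> k.-1%:R = k%:R - 1 :> rat.
Proof. by move=> k1; rewrite -[in RHS](prednK k1) -natr1 addrK. Qed.

Lemma trop_exp_tie {a : rat} {k} : (1 <= k)%N -> a = k%:R ->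
  trop_exp a k.-1 = trop_exp a k.
Proof. by move=> k1 ->; rewrite /trop_exp natr_pred //; ring. Qed.

Lemma trop_exp_tie_lt {a : rat} {k j} :
  (1 <= k)%N -> a = k%:R -> j != k.-1 -> j != k -> trop_exp a j < trop_exp a k.
Proof.
move=> k1 -> jk1 jk; rewrite -subr_gt0 trop_expB; have [kj|jk'] := ltnP k j.
  by move: kj; rewrite ltn_ratE => kj; rewrite -mulrNN; apply: mulr_gt0; lra.
have : (j < k.-1)%N by move: jk jk1 jk'; lia.
by rewrite ltn_ratE natr_pred // => jk2; apply: mulr_gt0; lra.
Qed.

Lemma big_nat_single {g : nat -> CC} {n k} : (k <= n)%N ->
  (forall j, (j <= n)%N -> j != k -> g j = 0) ->
  \sum_(0 <= j < n.+1) g j = g k.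
Proof.
move=> kn g0; rewrite (bigD1_seq k) ?mem_index_iota ?iota_uniq //=.
by rewrite big1_seq ?addr0 // => j /andP [jk]; rewrite mem_index_iota => /g0; apply.
Qed.

Lemma big_nat_pair {g : nat -> CC} {n k} : (1 <= k <= n)%N ->
  (forall j, (j <= n)%N -> j != k.-1 -> j != k -> g j = 0) ->
  \sum_(0 <= j < n.+1) g j = g k.-1 + g k.
Proof.
move=> /andP [k1 kn] g0; rewrite (bigD1_seq k) ?mem_index_iota ?iota_uniq //=.
rewrite -big_filter (bigD1_seq k.-1) ?filter_uniq ?iota_uniq //; last first.
  by rewrite mem_filter mem_index_iota; apply/andP; split; lia.
rewrite big1_seq; first by rewrite /= addr0 addrC.
move=> j /andP [jk1]; rewrite mem_filter mem_index_iota => /andP [jk jn].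
by apply: g0 => //; lia.
Qed.

Lemma trop_balance {n} {a : rat} {g : nat -> CC} :
  (1 <= n)%N -> 0 <= a -> g 0%N != 0 ->
  (forall E, (forall j, (j <= n)%N -> trop_exp a j <= E) ->
     \sum_(0 <= j < n.+1 | trop_exp a j == E) g j = 0) ->
  [\/ exists j, [/\ (1 <= j <= n.-1)%N, j%:R < a < j.+1%:R & g j = 0],
      n%:R < a /\ g n = 0 |
      exists2 k, (1 <= k <= n)%N & a = k%:R /\ g k.-1 + g k = 0].
Proof.
move=> n1 a0 g0 bal.
have [[k k1n ak]|nk] := pselect (exists2 k, (1 <= k <= n)%N & a = k%:R).
  apply: Or33; exists k => //; have /andP [k1 _] := k1n.
  split => //; have tk := trop_exp_tie k1 ak.
  rewrite -(bal (trop_exp a k)).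
    rewrite big_mkcond (big_nat_pair k1n); first by rewrite /= tk eqxx.
    by move=> j _ jk1 jk; rewrite lt_eqF ?trop_exp_tie_lt.
  move=> j _; have [->|jk1] := eqVneq j k.-1; first by rewrite tk.
  by have [->|jk] := eqVneq j k; last exact/ltW/trop_exp_tie_lt.
pose j0 := minn (Num.truncn a) n; have j0n : (j0 <= n)%N by rewrite geq_minr.
have hmax := trop_exp_argmax a0 nk.
have gj0 : g j0 = 0.
  rewrite -(bal (trop_exp a j0)); last first.
    by move=> j jn; have [->|/(hmax j jn)/ltW] := eqVneq j j0.
  rewrite big_mkcond (big_nat_single j0n); first by rewrite /= eqxx.
  by move=> j jn jj0; rewrite lt_eqF ?hmax.
have /andP [ta at1] := truncn_itv a0.
have [j00|j0p] := posnP j0; first by move: g0; rewrite -j00 gj0 eqxx.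
have aj0 : a != j0%:R by apply/eqP => aj0; apply: nk; exists j0; rewrite ?j0p.
have [tn|nt] := ltnP (Num.truncn a) n.
  have j0t : j0 = Num.truncn a by apply/minn_idPl/ltnW.
  apply: Or31; exists j0; split => //; first by rewrite j0p -ltnS prednK // j0t.
  by rewrite j0t lt_neqAle -j0t eq_sym aj0 j0t ta.
have j0e : j0 = n by apply/minn_idPr.
apply: Or32; rewrite -j0e; split => //; rewrite lt_neqAle eq_sym aj0 /=.
by apply: le_trans ta; rewrite ler_nat j0e.
Qed.

(** * Points of the surface *)

Lemma evM_scale {p : {mpoly CC[4]}} {d} c B :
  homog_deg p d -> evM p (c *: B) = c ^+ d * evM p B.
Proof.
move=> /dhomogP hp; rewrite /evM !mevalE mulr_sumr; apply: eq_big_seq => m hm.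
have es i : ents (c *: B) i = c * ents B i.
  by rewrite /ents; case: (val i) => [|[|[|?]]]; rewrite mxE.
under eq_bigr do rewrite es exprMn.
by rewrite big_split /= prodrXr -mdegE (hp m hm) mulrCA.
Qed.

Lemma homog0_evM_neq0 {p : {mpoly CC[4]}} B : homog_deg p 0 ->
  ~ (exists g : {mpoly CC[4]}, p = g * detP) -> evM p B != 0.
Proof.
move=> /dhomogP hp ndiv.
have pC : p = (p@_0%MM)%:MP.
  apply/mpolyP => m; rewrite mcoeffC.
  have [->|m0] := eqVneq m 0%MM; first by rewrite mulr1.
  rewrite mulr0; apply/eqP; rewrite -[_ == 0]negbK -mcoeff_msupp; apply/negP => /hp/eqP.
  by rewrite mdeg_eq0 (negbTE m0).
rewrite pC /evM mevalC; apply: contra_notN ndiv => /eqP p00; exists 0.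
by rewrite mul0r pC p00 mpolyC0.
Qed.

Lemma sum_top_coef {n} {T : nat -> ser} {e : nat -> rat} {c : nat -> CC} {E} :
  (forall j, (j <= n)%N -> top_term (T j) (e j) (c j)) ->
  (forall j, (j <= n)%N -> e j <= E) ->
  \sum_(0 <= j < n.+1) T j E = \sum_(0 <= j < n.+1 | e j == E) c j.
Proof.
move=> hT hE; rewrite [RHS]big_mkcond; apply: eq_big_seq => j.
rewrite mem_index_iota ltnS => jn; have [van <-] := hT j jn.
by have [<- //|ne] := eqVneq (e j) E; apply: van; rewrite lt_neqAle ne hE.
Qed.

Definition Fterm n (f : nat -> {mpoly CC[4]}) (A : 'M[ser]_2) (j : nat) : ser :=
  kmul (tpow (- ((j * j.+1)%N)%:R))
       (kmul (kpow (kdet A) (n - j)) (keval (f j) (ents A))).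

Lemma FsurfE n f A q : Fsurf n f A q = \sum_(0 <= j < n.+1) Fterm n f A j q.
Proof. exact: kadd_foldrE. Qed.

Lemma top_term_Fterm n {f A j a B de d} :
  homog_deg (f j) (2 * j) -> mx_top A a B -> top_term (kdet A) de d ->
  top_term (Fterm n f A j) (- ((j * j.+1)%N)%:R + ((n - j)%:R * de + (2 * j)%:R * a))
    (d ^+ (n - j) * evM (f j) B).
Proof.
move=> hf hA hd; rewrite -[_ * evM _ _]mul1r.
apply: top_term_kmul; first exact: top_term_tpow.
apply: top_term_kmul; first exact: top_term_kpow.
exact: top_term_keval hf (top_term_ents hA).
Qed.

Lemma Fsurf_degenerate n f A : kdet A = kzero -> Fsurf n f A = Fterm n f A n.
Proof.
move=> hdet; apply/funext => q; rewrite FsurfE big_nat_recr //= big_nat big1 ?add0r //.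
move=> j /andP [_ jn]; rewrite /Fterm hdet (_ : n - j = (n - j.+1).+1)%N; last by lia.
by rewrite /kpow iterS !kmul0 kmulr0.
Qed.

Lemma degenerate_in_C2n n f A a B : homog_deg (f n) (2 * n) ->
  kdet A = kzero -> Fsurf n f A = kzero -> lead A a B -> inCj f n B.
Proof.
move=> hf hdet hF hlead; have hB := lead_mx_top hlead.
split; first split; first by case: hlead.
  by have [_ <-] := top_term_kdet hB; rewrite hdet.
have hd : top_term (kdet A) 0 0 by rewrite hdet; apply: top_term_kzero.
have [_] := top_term_Fterm n hf hB hd.
by rewrite -Fsurf_degenerate // hF subnn expr0 mul1r.
Qed.

Lemma unimodular_lead {A : 'M[ser]_2} {a B} : kdet A = kconst 1 -> lead A a B ->
  0 <= a /\ (0 < a -> \det B = 0).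
Proof.
move=> hdet hlead; have [van <-] := top_term_kdet (lead_mx_top hlead).
rewrite hdet in van *; split => [|a0]; last by rewrite /kconst gt_eqF //; lra.
rewrite leNgt; apply/negP => a0; have /eqP := van 0 ltac:(lra).
by rewrite /kconst eqxx oner_eq0.
Qed.

Lemma Fterm_tops {n f} {A : 'M[ser]_2} {l a B} :
  (forall j, (j <= n)%N -> homog_deg (f j) (2 * j)) ->
  kmx_puiseux A -> kmx_nonzero A -> kdet A <> kzero -> is_puiseux l ->
  kdet (kscale l A) = kconst 1 -> lead (kscale l A) a B ->
  exists E (u : CC), u != 0 /\ forall j, (j <= n)%N ->
    top_term (Fterm n f A j) (E + trop_exp a j) (u * evM (f j) B).
Proof.
move=> hom hA hAnz hdet hl hdet1 hlead.
have [al [BA hlA]] := kmx_lead hA hAnz; have hBA := lead_mx_top hlA.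
have [de [d [d0 hd]]] := puiseux_lead (kdet_puiseux hA) hdet.
have l0 : l <> kzero.
  move=> l0; move/(congr1 (fun s => s 0)): hdet1.
  rewrite l0 /kdet /kscale !mxE !kmul0 /kadd /kopp /kconst eqxx /= oppr0 addr0.
  by move/eqP; rewrite eq_sym oner_eq0.
have [be [c [c0 hc]]] := puiseux_lead hl l0.
have [hde hcd] : 0 = be + be + de /\ 1 = c * c * d.
  apply: (top_term_inj (top_term_kconst 1)); rewrite ?oner_neq0 ?mulf_neq0 //.
  by rewrite -hdet1 kdet_kscale //; apply: top_term_kmul (top_term_kmul hc hc) hd.
have [ha hB] : be + al = a /\ c *: BA = B.
  apply: mx_top_inj (mx_top_kscale hc hBA) (lead_mx_top hlead) _ _.
    by rewrite scaler_eq0 negb_or c0; case: hlA.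
  by case: hlead.
exists (- (n%:R * (be + be))), (d ^+ n); split; first exact: expf_neq0.
move=> j jn; have dc : d * c ^+ 2 = 1 by rewrite hcd; ring.
have -> : - (n%:R * (be + be)) + trop_exp a j =
    - ((j * j.+1)%N)%:R + ((n - j)%:R * de + (2 * j)%:R * al).
  by rewrite /trop_exp -ha natrB // !natrM -natr1 (_ : de = - (be + be)); [ring | lra].
have -> : d ^+ n * evM (f j) B = d ^+ (n - j) * evM (f j) BA.
  rewrite -hB (evM_scale _ _ (hom j jn)) mulrA -{1}(subnK jn) exprD exprM.
  by rewrite -[d ^+ (n - j) * _ * _]mulrA -exprMn dc expr1n mulr1.
exact (top_term_Fterm n (hom j jn) hBA hd).
Qed.

Lemma Fsurf_root_balance {n f} {A : 'M[ser]_2} {E : rat} {u : CC} {a : rat}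
    {g : nat -> CC} :
  Fsurf n f A = kzero -> u != 0 ->
  (forall j, (j <= n)%N -> top_term (Fterm n f A j) (E + trop_exp a j) (u * g j)) ->
  forall E', (forall j, (j <= n)%N -> trop_exp a j <= E') ->
  \sum_(0 <= j < n.+1 | trop_exp a j == E') g j = 0.
Proof.
move=> hF u0 hT E' hE; apply: (mulfI u0); rewrite mulr0 mulr_sumr.
under eq_bigl => j do rewrite -(inj_eq (addrI E)).
rewrite -(sum_top_coef hT) => [|j /hE]; last by rewrite lerD2l.
by rewrite -FsurfE hF.
Qed.

Lemma inCone_coneM a (T : 'M[CC]_2 -> Prop) B : T B -> inCone a T (coneM a B).
Proof. by exists B; split => //; exists 1; rewrite oner_eq0 scale1r. Qed.

Lemma tie_in_Sigma_C f k B : inQ B -> evM (f k.-1) B + evM (f k) B = 0 ->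
  sigma_img f k B \/ (inCj f k.-1 B /\ inCj f k B).
Proof.
move=> QB sum0; have fk : evM (f k) B = - evM (f k.-1) B.
  by apply/eqP; rewrite -addr_eq0 addrC sum0.
have [f0|f0] := eqVneq (evM (f k.-1) B) 0.
  by right; split; split => //; rewrite fk f0 oppr0.
left; exists B; split => //; split => //; split; first by rewrite fk oppr_eq0.
exists 1; split; first by rewrite expr1n fk invrN mulrN opprK divff.
by exists 1; split; [exact: oner_neq0 | rewrite /rC !scale1r].
Qed.

Theorem theorem5p1 (n : nat) (f : nat -> {mpoly CC[4]}) :
  (1 <= n)%N ->
  (forall j, (j <= n)%N -> homog_deg (f j) (2 * j)) ->
  (forall j, (j <= n)%N -> ~ (exists g : {mpoly CC[4]}, f j = g * detP)) ->
  forall A : 'M[ser]_2,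
    kmx_puiseux A -> kmx_nonzero A -> Fsurf n f A = kzero ->
    forall M : 'M[CC]_2, VALrel A M ->
      Sigma_inf n f M \/ Sigma_R n f M \/ Sigma_C n f M.
Proof.
move=> n1 hom ndiv A hA hAnz hF M
  [[hdet [a [B [hlead ->]]]] | [hdet [l [a [B [hl [hdet1 [hlead ->]]]]]]]].
  by left; apply: degenerate_in_C2n (hom n (leqnn n)) hdet hF hlead.
have [a0 detB] := unimodular_lead hdet1 hlead.
have QB : 0 < a -> inQ B by move=> a_gt0; split; [case: hlead | exact: detB].
have [E [u [u0 hT]]] := Fterm_tops hom hA hAnz hdet hl hdet1 hlead.
have f0 := homog0_evM_neq0 B (hom 0%N isT) (ndiv 0%N isT).
case: (trop_balance n1 a0 f0 (Fsurf_root_balance hF u0 hT))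
  => [[j [j1n ja fj]]|[na fn]|[k k1n [ak fk]]].
- right; left; left; exists j; split => //; exists a; split => //.
  apply: inCone_coneM; split => //; apply: QB.
  by case/andP: ja => + _; apply: le_lt_trans.
- right; left; right; exists a; split => //.
  by apply: inCone_coneM; split => //; apply: QB; apply: le_lt_trans na.
- right; right; exists k; split => //; rewrite -ak; apply: inCone_coneM.
  by apply: tie_in_Sigma_C fk; apply: QB; rewrite ak ltr0n; case/andP: k1n.
Qed.
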